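(* Let $\Lambda<0$, $M>0$, $\ell\ge2$, and on the static region $r>r_h$ of Schwarzschild–anti de Sitter use the tortoise coordinate $r^*=-\int_r^\infty dr'/f(r')\in(-\infty,0)$. Then $$\phi(t,r^* )=\frac{r\,e^{w_\ell(r^*+t)}}{(\ell+2)(\ell-1)r+6M}$$ solves the Zerilli equation $(\partial_t^2-\partial_{r^*}^2+fV^Z_\ell)\phi=0$, belongs to $L^2((-\infty,0),dr^* )$ for every $t$, grows exponentially in $t$, and satisfies the Robin boundary condition $\partial_{r^*}\phi|_{r^*=0}=\tan(\alpha)\,\phi|_{r^*=0}$ with $\tan\alpha=w_\ell-\frac{2M\Lambda}{(\ell-1)(\ell+2)}$. Hence, for the dynamics defined by the self-adjoint extension of $-\partial_{r^*}^2+fV^Z_\ell$ with this boundary condition, the SAdS black hole is linearly unstable.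
   Context: $f=1-\frac{2M}{r}-\frac{\Lambda r^2}{3}$ with single positive root $r_h$; $w_\ell=\frac{1}{12M}\frac{(\ell+2)!}{(\ell-2)!}$; $\mu=(\ell-1)(\ell+2)$; Zerilli potential $V^Z_\ell=\frac{[\mu^2\ell(\ell+1)-24M^2\Lambda]r^3+6\mu^2Mr^2+36\mu M^2r+72M^3}{r^3(6M+\mu r)^2}$. The Robin condition (for $\alpha\in[-\pi,\pi]$) defines a self-adjoint extension of $-\partial_{r^*}^2+fV^Z_\ell$ on $C^\infty_0((-\infty,0))$ in $L^2((-\infty,0),dr^* )$, and the evolution is $\partial_t^2\phi+{}^\alpha\mathcal H\phi=0$ in that domain. *)

From Stdlib Require Import Reals Lra Factorial.
Open Scope R_scope.

Definition fSAdS (M Lam r : R) : R := 1 - 2 * M / r - Lam * r ^ 2 / 3.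

Definition muL (l : nat) : R := (INR l - 1) * (INR l + 2).

Definition wL (M : R) (l : nat) : R :=
  / (12 * M) * (INR (fact (l + 2)) / INR (fact (l - 2))).

Definition VZ (M Lam : R) (l : nat) (r : R) : R :=
  ((muL l ^ 2 * (INR l * (INR l + 1)) - 24 * M ^ 2 * Lam) * r ^ 3
   + 6 * muL l ^ 2 * M * r ^ 2 + 36 * muL l * M ^ 2 * r + 72 * M ^ 3)
  / (r ^ 3 * (6 * M + muL l * r) ^ 2).

(* The candidate solution, written in terms of t, r* and r = r(rstar). *)
Definition phiZ (M : R) (l : nat) (t rs r : R) : R :=
  r * exp (wL M l * (rs + t)) / ((INR l + 2) * (INR l - 1) * r + 6 * M).

Definition is_deriv2 (g : R -> R) (x v : R) : Prop :=
  exists g' : R -> R,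
    (exists d, 0 < d /\ forall y, Rabs (y - x) < d -> derivable_pt_lim g y (g' y))
    /\ derivable_pt_lim g' x v.

(* Write [phi = G(r) e^{w (r* + t)}] with [G(r) = r / (mu r + 6 M)].  Because [dr/dr* = f],
   the Zerilli equation becomes an algebraic identity in [r], which holds because
   [w = l (l + 1) mu / (12 M)] is the algebraically special frequency.  The tortoise
   coordinate is an increasing bijection from [(r_h, oo)] onto [(-oo, 0)] (it diverges
   logarithmically at the simple root [r_h]), so its inverse is differentiable with
   derivative [f].  Since [0 < G <= 1/mu], [phi^2] is dominated by a multiple of
   [e^{2 w r*}], integrable on [(-oo, 0)].  At [r* = 0] we have [r = oo], where
   [G -> 1/mu] and [dG/dr* -> w/mu - 2 M Lam / mu^2] (from [f ~ - Lam r^2 / 3]), which gives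
   the Robin ratio. *)

From Stdlib Require Import Reals Lra Lia Factorial Ranalysis5 ClassicalEpsilon FunctionalExtensionality.
From Coquelicot Require Import Coquelicot.
Open Scope R_scope.

Lemma muL_ge_4 l : (2 <= l)%nat -> 4 <= muL l.
Proof. intros Hl; apply le_INR in Hl; simpl in Hl; unfold muL; nra. Qed.

Lemma wL_eq M l : 0 < M -> (2 <= l)%nat ->
  wL M l = INR l * (INR l + 1) * muL l / (12 * M).
Proof.
  intros HM Hl; unfold wL, muL.
  replace (l + 2)%nat with (S (S (S (S (l - 2))))) by lia.
  rewrite !fact_simpl, !mult_INR, !S_INR, minus_INR by lia; simpl.
  assert (0 < INR (fact (l - 2))) by apply lt_0_INR, lt_O_fact.
  field; lra.
Qed.

Lemma wL_pos M l : 0 < M -> (2 <= l)%nat -> 0 < wL M l.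
Proof.
  intros HM Hl; rewrite wL_eq by assumption.
  pose proof (muL_ge_4 l Hl); apply le_INR in Hl; simpl in Hl.
  apply Rdiv_lt_0_compat; [apply Rmult_lt_0_compat; [apply Rmult_lt_0_compat|]|]; lra.
Qed.

Section Profile.
Variables (M Lam : R) (l : nat).
Hypotheses (HM : 0 < M) (Hl : (2 <= l)%nat).

Let w := wL M l.
Let mu := muL l.

(* Along [dr/dr* = f], the first and second [r*]-derivatives of [phiZ] are [zprof_x] and
   [zprof_xx] times the exponential factor of [phiZ_eq]. *)
Definition zprof r := r / (mu * r + 6 * M).
Definition zprof_dr r := 6 * M / (mu * r + 6 * M) ^ 2.
Definition zprof_x r := w * zprof r + fSAdS M Lam r * zprof_dr r.
Definition zprof_xx r :=
  fSAdS M Lam r * (w * zprof_dr r + (2 * M / r ^ 2 - 2 * Lam * r / 3) * zprof_dr r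
                   - fSAdS M Lam r * 12 * M * mu / (mu * r + 6 * M) ^ 3)
  + w * zprof_x r.

Lemma zprof_den_pos r : 0 < r -> 0 < mu * r + 6 * M.
Proof. intros Hr; pose proof (muL_ge_4 l Hl); unfold mu; nra. Qed.

Lemma phiZ_eq t x r : phiZ M l t x r = zprof r * exp (w * (x + t)).
Proof.
  unfold phiZ, zprof, mu, w; replace ((INR l + 2) * (INR l - 1)) with (muL l)
    by (unfold muL; ring).
  unfold Rdiv; ring.
Qed.

Lemma zprof_zerilli r : 0 < r ->
  w ^ 2 * zprof r - zprof_xx r + fSAdS M Lam r * VZ M Lam l r * zprof r = 0.
Proof.
  intros Hr; pose proof (zprof_den_pos r Hr).
  unfold zprof_xx, zprof_x, zprof_dr, zprof, VZ, fSAdS, w, mu in *.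
  rewrite (wL_eq M l HM Hl); unfold muL in *; field; lra.
Qed.

Lemma zprof_pos_le r : 0 < r -> 0 < zprof r <= / mu.
Proof.
  intros Hr; pose proof (zprof_den_pos r Hr); pose proof (muL_ge_4 l Hl).
  split; [apply Rdiv_lt_0_compat; lra|].
  assert (/ mu - zprof r = 6 * M / (mu * (mu * r + 6 * M)))
    by (unfold zprof, mu in *; field; lra).
  assert (0 < 6 * M / (mu * (mu * r + 6 * M))) by (apply Rdiv_lt_0_compat; unfold mu in *; nra).
  lra.
Qed.

(* The profiles as functions of [u = 1/r]: the limit [r -> oo] becomes continuity at [u = 0]. *)
Definition zprof_u u := / (mu + 6 * M * u).
Definition zprof_x_u u :=
  w * zprof_u u + (u ^ 2 - 2 * M * u ^ 3 - Lam / 3) * (6 * M) / (mu + 6 * M * u) ^ 2.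

Lemma zprof_inv r : 0 < r -> zprof r = zprof_u (/ r) /\ zprof_x r = zprof_x_u (/ r).
Proof.
  intros Hr; pose proof (zprof_den_pos r Hr).
  assert (mu + 6 * M * / r <> 0).
  { replace (mu * r + 6 * M) with (r * (mu + 6 * M * / r)) in H by (field; lra).
    intros Hc; rewrite Hc in H; lra. }
  unfold zprof_x_u, zprof_x, zprof_u, zprof, zprof_dr, fSAdS.
  split; field; lra.
Qed.

Lemma zprof_u_continuous : continuity_pt zprof_u 0 /\ continuity_pt zprof_x_u 0.
Proof.
  pose proof (muL_ge_4 l Hl).
  split; apply derivable_continuous_pt, ex_derive_Reals_0;
    unfold zprof_x_u, zprof_u, mu in *; auto_derive; repeat split; try lra; nra.
Qed.

Lemma phiZ_dt t x r :
  derivable_pt_lim (fun s => phiZ M l s x r) t (w * phiZ M l t x r).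
Proof.
  apply is_derive_Reals.
  replace (fun s => phiZ M l s x r) with (fun s => zprof r * exp (w * (x + s)))
    by (apply functional_extensionality; intros; rewrite phiZ_eq; reflexivity).
  rewrite phiZ_eq; auto_derive; [easy | ring].
Qed.

Section Flow.
Variables (rr : R -> R) (x : R).
Hypotheses (Hrr_pos : 0 < rr x) (Hrr_deriv : derivable_pt_lim rr x (fSAdS M Lam (rr x))).

Lemma phiZ_dx t :
  derivable_pt_lim (fun y => phiZ M l t y (rr y)) x (zprof_x (rr x) * exp (w * (x + t))).
Proof.
  pose proof (zprof_den_pos (rr x) Hrr_pos).
  pose proof Hrr_deriv as Dr; apply is_derive_Reals in Dr; apply is_derive_Reals.
  replace (fun y => phiZ M l t y (rr y)) with (fun y => zprof (rr y) * exp (w * (y + t)))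
    by (apply functional_extensionality; intros; rewrite phiZ_eq; reflexivity).
  unfold zprof; auto_derive.
  - repeat split; try lra; eexists; exact Dr.
    replace (Derive (fun y => rr y) x) with (fSAdS M Lam (rr x))
      by (symmetry; apply is_derive_unique; exact Dr).
    unfold zprof_x, zprof_dr, zprof; field; lra.
Qed.

Lemma zprof_x_dx t :
  derivable_pt_lim (fun y => zprof_x (rr y) * exp (w * (y + t))) x
    (zprof_xx (rr x) * exp (w * (x + t))).
Proof.
  pose proof (zprof_den_pos (rr x) Hrr_pos).
  pose proof Hrr_deriv as Dr; apply is_derive_Reals in Dr; apply is_derive_Reals.
  unfold zprof_x, zprof_dr, zprof, fSAdS; auto_derive.
  - repeat split; try lra; try (eexists; exact Dr); intros Hc; nra.
  - replace (Derive (fun y => rr y) x) with (fSAdS M Lam (rr x))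
      by (symmetry; apply is_derive_unique; exact Dr).
    unfold zprof_xx, zprof_x, zprof_dr, zprof, fSAdS; field; lra.
Qed.

End Flow.

End Profile.

Lemma limit1_in_ext (f g : R -> R) D l x0 :
  (forall x, D x -> f x = g x) -> limit1_in g D l x0 -> limit1_in f D l x0.
Proof.
  intros E Hg eps Heps; destruct (Hg eps Heps) as (a & Ha & Hb).
  exists a; split; [exact Ha|]; intros x (Dx & Hx); rewrite E by exact Dx; auto.
Qed.

Lemma limit1_in_comp_continuous (q g : R -> R) D l x0 :
  limit1_in q D l x0 -> continuity_pt g l -> limit1_in (fun x => g (q x)) D (g l) x0.
Proof.
  intros Hq Hg eps Heps.
  destruct (Hg eps Heps) as (a & Ha & Hga); destruct (Hq a Ha) as (b & Hb & Hqb).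
  exists b; split; [exact Hb|]; intros x (Dx & Hx).
  destruct (Req_dec (q x) l) as [E | E].
  - rewrite E; simpl; unfold R_dist; rewrite Rminus_diag, Rabs_R0; lra.
  - apply Hga; repeat split; auto.
Qed.

Lemma RiemannInt_exp_le (c k a b : R)
  (pr : Riemann_integrable (fun x => c * exp (k * x)) a b) :
  0 <= c -> 0 < k -> a <= b -> RiemannInt pr <= c * exp (k * b) / k.
Proof.
  intros Hc Hk Hab.
  set (F := fun x => c * exp (k * x) / k).
  assert (IF : is_RInt (fun x => c * exp (k * x)) a b (F b - F a)).
  { apply (is_RInt_derive F).
    - intros x _; unfold F; auto_derive; [easy | field; lra].
    - intros x _; apply continuity_pt_filterlim, derivable_continuous_pt,
        ex_derive_Reals_0; auto_derive; easy. }
  rewrite <- (RInt_Reals _ _ _ pr), (is_RInt_unique _ _ _ _ IF).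
  assert (0 <= F a) by (unfold F; apply Rmult_le_pos;
    [apply Rmult_le_pos; [lra | left; apply exp_pos] | left; apply Rinv_0_lt_compat; lra]).
  unfold F in *; lra.
Qed.

Lemma fSAdS_factor M Lam rh r : 0 < rh -> 0 < r -> fSAdS M Lam rh = 0 ->
  fSAdS M Lam r = (r - rh) * (2 * M / (r * rh) - Lam * (r + rh) / 3).
Proof.
  intros Hrh Hr H0; rewrite <- (Rminus_0_r (fSAdS M Lam r)), <- H0.
  unfold fSAdS; field; lra.
Qed.

Section Tortoise.
Variables (M Lam rh : R) (rstar : R -> R).
Hypotheses (HM : 0 < M) (HLam : Lam < 0) (Hrh : 0 < rh) (Hfrh : fSAdS M Lam rh = 0).
Hypothesis Hrs_deriv : forall r, rh < r -> derivable_pt_lim rstar r (/ fSAdS M Lam r).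
Hypothesis Hrs_inf :
  forall eps, 0 < eps -> exists A, forall r, A < r -> Rabs (rstar r) < eps.

Lemma fSAdS_pos r : rh < r -> 0 < fSAdS M Lam r.
Proof.
  intros Hr; rewrite (fSAdS_factor M Lam rh r) by lra.
  assert (0 < 2 * M / (r * rh)) by (apply Rdiv_lt_0_compat; nra).
  apply Rmult_lt_0_compat; nra.
Qed.

Lemma rstar_increasing a b : rh < a -> a < b -> rstar a < rstar b.
Proof.
  intros Ha Hab.
  destruct (MVT_cor2 rstar (fun r => / fSAdS M Lam r) a b Hab) as (c & Hc & Hcab).
  { intros c Hc; apply Hrs_deriv; lra. }
  assert (0 < / fSAdS M Lam c) by (apply Rinv_0_lt_compat, fSAdS_pos; lra).
  nra.
Qed.

Lemma rstar_lt_inv a b : rh < a -> rh < b -> rstar a < rstar b -> a < b.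
Proof.
  intros Ha Hb Hs; destruct (Rlt_or_le a b) as [|Hba]; [assumption|].
  destruct (Req_dec b a) as [->|]; [lra|].
  pose proof (rstar_increasing b a Hb ltac:(lra)); lra.
Qed.

Lemma rstar_le_inv a b : rh < a -> rh < b -> rstar a <= rstar b -> a <= b.
Proof.
  intros Ha Hb Hs; destruct (Rle_or_lt a b) as [|Hba]; [assumption|].
  pose proof (rstar_increasing b a Hb Hba); lra.
Qed.

Lemma rstar_continuous r : rh < r -> continuity_pt rstar r.
Proof. intros Hr; apply derivable_continuous_pt; exists (/ fSAdS M Lam r); apply Hrs_deriv; exact Hr. Qed.

Lemma rstar_neg r : rh < r -> rstar r < 0.
Proof.
  intros Hr; pose proof (rstar_increasing r (r + 1) Hr ltac:(lra)) as Hinc.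
  destruct (Rlt_or_le (rstar r) 0) as [|Hge]; [assumption|].
  destruct (Hrs_inf (rstar (r + 1) - rstar r) ltac:(lra)) as (A & HA).
  set (r' := Rmax A (r + 1) + 1).
  pose proof (Rmax_l A (r + 1)); pose proof (Rmax_r A (r + 1)).
  specialize (HA r' ltac:(unfold r'; lra)); apply Rabs_def2 in HA.
  assert (rstar (r + 1) <= rstar r') by (left; apply rstar_increasing; unfold r'; lra).
  lra.
Qed.

Lemma fSAdS_le_linear c : rh < c <= rh + 1 ->
  fSAdS M Lam c <= (2 * M / rh ^ 2 - Lam * (2 * rh + 1) / 3) * (c - rh).
Proof.
  intros Hc; rewrite (fSAdS_factor M Lam rh c), Rmult_comm by lra.
  apply Rmult_le_compat_r; [lra|].
  assert (2 * M / (c * rh) <= 2 * M / rh ^ 2)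
    by (apply Rmult_le_compat_l, Rinv_le_contravar; nra).
  nra.
Qed.

(* Since [f] vanishes at most linearly at [r_h], [rstar] diverges at least logarithmically. *)
Lemma rstar_le_log r : rh < r <= rh + 1 ->
  rstar r <= rstar (rh + 1) + ln (r - rh) / (2 * M / rh ^ 2 - Lam * (2 * rh + 1) / 3).
Proof.
  intros Hr; set (K := 2 * M / rh ^ 2 - Lam * (2 * rh + 1) / 3).
  assert (HK : 0 < K) by (assert (0 < 2 * M / rh ^ 2) by (apply Rdiv_lt_0_compat; nra);
                          unfold K; nra).
  destruct (Req_dec r (rh + 1)) as [->|Hne].
  { replace (rh + 1 - rh) with 1 by ring; rewrite ln_1; unfold Rdiv; lra. }
  set (h := fun s => rstar s - ln (s - rh) / K).
  destruct (MVT_cor2 h (fun s => / fSAdS M Lam s - / (K * (s - rh))) r (rh + 1))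
    as (c & Hc & Hcr); [lra| |].
  - intros c Hc; apply derivable_pt_lim_minus; [apply Hrs_deriv; lra|].
    apply is_derive_Reals; auto_derive; [lra | field; lra].
  - assert (0 < fSAdS M Lam c) by (apply fSAdS_pos; lra).
    assert (fSAdS M Lam c <= K * (c - rh)) by (apply fSAdS_le_linear; lra).
    assert (/ (K * (c - rh)) <= / fSAdS M Lam c) by (apply Rinv_le_contravar; lra).
    unfold h in Hc; replace (rh + 1 - rh) with 1 in Hc by ring;
    rewrite ln_1 in Hc.
    nra.
Qed.

Lemma rstar_unbounded_below x : exists r, rh < r /\ rstar r < x.
Proof.
  set (K := 2 * M / rh ^ 2 - Lam * (2 * rh + 1) / 3).
  assert (HK : 0 < K) by (assert (0 < 2 * M / rh ^ 2) by (apply Rdiv_lt_0_compat; nra);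
                          unfold K; nra).
  set (y := Rmin (x - rstar (rh + 1) - 1) (-1)).
  pose proof (Rmin_l (x - rstar (rh + 1) - 1) (-1)); pose proof (Rmin_r (x - rstar (rh + 1) - 1) (-1)).
  assert (0 < exp (K * y) < 1)
    by (split; [apply exp_pos | rewrite <- exp_0; apply exp_increasing; unfold y in *; nra]).
  exists (rh + exp (K * y)); split; [lra|].
  pose proof (rstar_le_log (rh + exp (K * y)) ltac:(lra)) as Hlog; fold K in Hlog.
  replace (rh + exp (K * y) - rh) with (exp (K * y)) in Hlog by ring.
  rewrite ln_exp in Hlog; replace (K * y / K) with y in Hlog by (field; lra).
  unfold y in *; lra.
Qed.

Lemma rstar_surjective x : x < 0 -> exists r, rh < r /\ rstar r = x.
Proof.
  intros Hx; destruct (rstar_unbounded_below x) as (r1 & Hr1 & Hr1x).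
  destruct (Hrs_inf (- x) ltac:(lra)) as (A & HA).
  set (r2 := Rmax A r1 + 1).
  pose proof (Rmax_l A r1); pose proof (Rmax_r A r1).
  specialize (HA r2 ltac:(unfold r2; lra)); apply Rabs_def2 in HA.
  destruct (f_interv_is_interv rstar r1 r2 x) as (r & Hr & Hrx).
  - unfold r2; lra.
  - lra.
  - intros; apply rstar_continuous; lra.
  - exists r; split; [lra | exact Hrx].
Qed.

Lemma rstar_inverse :
  exists rr : R -> R, forall x, x < 0 -> rh < rr x /\ rstar (rr x) = x.
Proof.
  assert (Hex : forall x, exists r, x < 0 -> rh < r /\ rstar r = x).
  { intros x; destruct (Rlt_or_le x 0) as [Hx | Hx].
    - destruct (rstar_surjective x Hx) as (r & Hr); exists r; auto.
    - exists 0; intros; lra. }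
  exists (fun x => proj1_sig (constructive_indefinite_description _ (Hex x))).
  intros x; exact (proj2_sig (constructive_indefinite_description _ (Hex x))).
Qed.

Section Inverse.
Variable rr : R -> R.
Hypothesis Hrr : forall x, x < 0 -> rh < rr x /\ rstar (rr x) = x.

Lemma rr_rstar r : rh < r -> rr (rstar r) = r.
Proof.
  intros Hr; pose proof (rstar_neg r Hr); destruct (Hrr (rstar r)) as (Hrr1 & Hrr2); [lra|].
  apply Rle_antisym; apply rstar_le_inv; lra.
Qed.

Lemma rr_continuous r1 r2 y : rh < r1 < r2 -> rstar r1 < y < rstar r2 -> continuity_pt rr y.
Proof.
  intros Hr Hy; pose proof (rstar_neg r2 ltac:(lra)).
  apply (continuity_pt_recip_interv rstar rr r1 r2); [lra | | | | | lra].
  - intros a b Ha Hab _; apply rstar_increasing; lra.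
  - intros z Hz1 Hz2; apply Hrr; unfold id; lra.
  - intros z Hz1 Hz2; destruct (Hrr z) as (Hz & Hzr); [lra|].
    split; apply rstar_le_inv; lra.
  - intros a Ha; apply rstar_continuous; lra.
Qed.

Lemma rr_derivable x : x < 0 -> derivable_pt_lim rr x (fSAdS M Lam (rr x)).
Proof.
  intros Hx; destruct (Hrr x Hx) as (Hr & Hrx).
  set (r1 := (rh + rr x) / 2); set (r2 := rr x + 1).
  assert (Hs1 : rstar r1 < x) by (rewrite <- Hrx; apply rstar_increasing; unfold r1; lra).
  assert (Hs2 : x < rstar r2) by (rewrite <- Hrx; apply rstar_increasing; unfold r2; lra).
  assert (Hg1 : rr (rstar r1) = r1) by (apply rr_rstar; unfold r1; lra).
  assert (Hg2 : rr (rstar r2) = r2) by (apply rr_rstar; unfold r2; lra).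
  assert (Prf : forall a, rr (rstar r1) <= a <= rr (rstar r2) -> derivable_pt rstar a).
  { intros a Ha; rewrite Hg1 in Ha; exists (/ fSAdS M Lam a); apply Hrs_deriv.
    unfold r1 in Ha; lra. }
  assert (Hbr : rr (rstar r1) <= rr x <= rr (rstar r2))
    by (rewrite Hg1, Hg2; unfold r1, r2; lra).
  assert (Hfx : 0 < fSAdS M Lam (rr x)) by (apply fSAdS_pos; exact Hr).
  assert (Hdp : derive_pt rstar (rr x) (Prf (rr x) Hbr) = / fSAdS M Lam (rr x))
    by (apply derive_pt_eq_0, Hrs_deriv, Hr).
  pose proof (rstar_neg r2 ltac:(unfold r2; lra)).
  replace (fSAdS M Lam (rr x)) with (1 / derive_pt rstar (rr x) (Prf (rr x) Hbr))
    by (rewrite Hdp; field; lra).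
  apply (derivable_pt_lim_recip_interv rstar rr (rstar r1) (rstar r2) x Prf);
    [apply (rr_continuous r1 r2); unfold r1, r2 in *; lra | lra | lra | |].
  - intros y Hy; apply Hrr; unfold id; lra.
  - rewrite Hdp; apply Rinv_neq_0_compat; lra.
Qed.

Lemma inv_rr_limit : limit1_in (fun x => / rr x) (fun x => x < 0) 0 0.
Proof.
  intros eps Heps; set (R0 := Rmax rh (/ eps) + 1).
  pose proof (Rmax_l rh (/ eps)); pose proof (Rmax_r rh (/ eps)).
  pose proof (rstar_neg R0 ltac:(unfold R0; lra)).
  exists (- rstar R0); split; [lra|].
  intros x (Hx & Hdx); simpl in *; unfold R_dist in *; rewrite Rminus_0_r in *.
  rewrite Rabs_left in Hdx by lra.
  destruct (Hrr x Hx) as (Hr & Hrx).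
  assert (R0 < rr x) by (apply rstar_lt_inv; unfold R0 in *; lra).
  assert (0 < / eps) by (apply Rinv_0_lt_compat; lra).
  rewrite Rabs_right by (left; apply Rinv_0_lt_compat; lra).
  replace eps with (/ / eps) by (field; lra).
  apply Rinv_lt_contravar; unfold R0 in *; nra.
Qed.

End Inverse.

End Tortoise.

Section Solution.
Variables (M Lam : R) (l : nat) (rr : R -> R).
Hypotheses (HM : 0 < M) (Hl : (2 <= l)%nat).
Hypothesis Hrr_pos : forall x, x < 0 -> 0 < rr x.
Hypothesis Hrr_deriv : forall x, x < 0 -> derivable_pt_lim rr x (fSAdS M Lam (rr x)).
Hypothesis Hrr_inf : limit1_in (fun x => / rr x) (fun x => x < 0) 0 0.

Let w := wL M l.

Lemma phiZ_zerilli t x : x < 0 ->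
  exists a b,
    is_deriv2 (fun s => phiZ M l s x (rr x)) t a /\
    is_deriv2 (fun y => phiZ M l t y (rr y)) x b /\
    a - b + fSAdS M Lam (rr x) * VZ M Lam l (rr x) * phiZ M l t x (rr x) = 0.
Proof.
  intros Hx.
  exists (w ^ 2 * phiZ M l t x (rr x)), (zprof_xx M Lam l (rr x) * exp (w * (x + t))).
  split; [|split].
  - exists (fun s => w * phiZ M l s x (rr x)); split.
    + exists 1; split; [lra|]; intros s _; apply phiZ_dt.
    + replace (w ^ 2 * phiZ M l t x (rr x)) with (w * (w * phiZ M l t x (rr x))) by ring.
      apply derivable_pt_lim_scal, phiZ_dt.
  - exists (fun y => zprof_x M Lam l (rr y) * exp (w * (y + t))); split.
    + exists (- x); split; [lra|]; intros y Hy; apply Rabs_def2 in Hy.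
      apply phiZ_dx; [exact HM | exact Hl | apply Hrr_pos | apply Hrr_deriv]; lra.
    + apply zprof_x_dx; auto.
  - rewrite phiZ_eq; fold w.
    pose proof (zprof_zerilli M Lam l HM Hl (rr x) (Hrr_pos x Hx)) as Z; fold w in Z.
    transitivity ((w ^ 2 * zprof M l (rr x) - zprof_xx M Lam l (rr x)
      + fSAdS M Lam (rr x) * VZ M Lam l (rr x) * zprof M l (rr x)) * exp (w * (x + t)));
      [ring | rewrite Z; ring].
Qed.

Lemma phiZ_sqr_le t x : x < 0 ->
  phiZ M l t x (rr x) ^ 2 <= / muL l ^ 2 * exp (2 * w * t) * exp (2 * w * x).
Proof.
  intros Hx; pose proof (zprof_pos_le M l HM Hl (rr x) (Hrr_pos x Hx)) as (G0 & G1).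
  assert (E : exp (2 * w * t) * exp (2 * w * x) = exp (w * (x + t)) ^ 2)
    by (rewrite <- exp_plus; simpl; rewrite Rmult_1_r, <- exp_plus; f_equal; ring).
  rewrite phiZ_eq, Rmult_assoc, E, Rpow_mult_distr, <- pow_inv.
  apply Rmult_le_compat_r; [apply pow2_ge_0 | apply pow_incr; fold w; lra].
Qed.

Lemma phiZ_square_integrable t :
  (forall a b, a <= b < 0 ->
     inhabited (Riemann_integrable (fun x => phiZ M l t x (rr x) ^ 2) a b)) /\
  exists C, forall a b (pr : Riemann_integrable (fun x => phiZ M l t x (rr x) ^ 2) a b),
    a <= b < 0 -> RiemannInt pr <= C.
Proof.
  pose proof (wL_pos M l HM Hl) as Hw; fold w in Hw.
  set (c := / muL l ^ 2 * exp (2 * w * t)).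
  assert (Hc : 0 <= c).
  { unfold c; apply Rmult_le_pos; [apply Rlt_le, Rinv_0_lt_compat, pow_lt |
      apply Rlt_le, exp_pos]; pose proof (muL_ge_4 l Hl); lra. }
  split.
  - intros a b Hab; constructor; apply continuity_implies_RiemannInt; [lra|].
    intros y Hy; apply derivable_continuous_pt.
    exists (2 * phiZ M l t y (rr y) * (zprof_x M Lam l (rr y) * exp (w * (y + t)))).
    apply (derivable_pt_lim_comp (fun y => phiZ M l t y (rr y)) (fun u => u ^ 2)).
    + apply phiZ_dx; [exact HM | exact Hl | apply Hrr_pos | apply Hrr_deriv]; lra.
    + apply is_derive_Reals; auto_derive; [easy | ring].
  - exists (c / (2 * w)); intros a b pr (Hab & Hb).
    assert (pr2 : Riemann_integrable (fun x => c * exp (2 * w * x)) a b).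
    { apply continuity_implies_RiemannInt; [exact Hab|]; intros y _.
      apply derivable_continuous_pt, ex_derive_Reals_0; auto_derive; easy. }
    apply Rle_trans with (RiemannInt pr2).
    + apply RiemannInt_P19; [exact Hab|]; intros x Hx; apply phiZ_sqr_le; lra.
    + apply Rle_trans with (c * exp (2 * w * b) / (2 * w));
        [apply RiemannInt_exp_le; lra|].
      assert (exp (2 * w * b) <= 1) by (rewrite <- exp_0; left; apply exp_increasing; nra).
      unfold Rdiv; apply Rmult_le_compat_r; [apply Rlt_le, Rinv_0_lt_compat; lra | nra].
Qed.

Lemma phiZ_exponential_growth :
  exists kappa, 0 < kappa /\
    (forall t x, x < 0 -> phiZ M l t x (rr x) = exp (kappa * t) * phiZ M l 0 x (rr x)) /\
    exists x0, x0 < 0 /\ phiZ M l 0 x0 (rr x0) <> 0.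
Proof.
  exists w; split; [apply wL_pos; assumption | split].
  - intros t x _; rewrite !phiZ_eq; fold w.
    replace (w * (x + t)) with (w * t + w * (x + 0)) by ring; rewrite exp_plus; ring.
  - exists (-1); split; [lra|]; rewrite phiZ_eq.
    pose proof (zprof_pos_le M l HM Hl (rr (-1)) (Hrr_pos (-1) ltac:(lra))) as (G0 & _).
    pose proof (exp_pos (wL M l * (-1 + 0))); apply Rgt_not_eq, Rmult_lt_0_compat; lra.
Qed.

Lemma phiZ_robin t :
  exists (dphi : R -> R) (L0 L1 : R),
    (forall x, x < 0 -> derivable_pt_lim (fun y => phiZ M l t y (rr y)) x (dphi x)) /\
    limit1_in (fun x => phiZ M l t x (rr x)) (fun x => x < 0) L0 0 /\
    limit1_in dphi (fun x => x < 0) L1 0 /\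
    L1 = (wL M l - 2 * M * Lam / muL l) * L0.
Proof.
  set (D := fun x : R => x < 0).
  pose proof (zprof_u_continuous M Lam l Hl) as (Cu & Cxu).
  assert (Lexp : limit1_in (fun x => exp (w * (x + t))) D (exp (w * (0 + t))) 0).
  { apply (limit1_in_comp_continuous (fun x => x) (fun x => exp (w * (x + t)))).
    - intros eps Heps; exists eps; split; [exact Heps|]; intros x (_ & Hx); exact Hx.
    - apply derivable_continuous_pt, ex_derive_Reals_0; auto_derive; easy. }
  exists (fun x => zprof_x M Lam l (rr x) * exp (w * (x + t))),
    (zprof_u M l 0 * exp (w * (0 + t))), (zprof_x_u M Lam l 0 * exp (w * (0 + t))).
  split; [|split; [|split]].
  - intros x Hx; apply phiZ_dx; auto.
  - apply (limit1_in_ext _ (fun x => zprof_u M l (/ rr x) * exp (w * (x + t)))).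
    { intros x Hx; rewrite phiZ_eq; f_equal; apply zprof_inv; auto. }
    apply limit_mul; [apply limit1_in_comp_continuous|]; assumption.
  - apply (limit1_in_ext _ (fun x => zprof_x_u M Lam l (/ rr x) * exp (w * (x + t)))).
    { intros x Hx; f_equal; apply zprof_inv; auto. }
    apply limit_mul; [apply limit1_in_comp_continuous|]; assumption.
  - pose proof (muL_ge_4 l Hl).
    unfold zprof_x_u, zprof_u; fold w; field; lra.
Qed.

End Solution.

Theorem mainTheorem10
  (M Lam rh : R) (l : nat) (rstar : R -> R)
  (HLam : Lam < 0) (HM : 0 < M) (Hl : (2 <= l)%nat)
  (Hrh : 0 < rh) (Hfrh : fSAdS M Lam rh = 0)
  (Hrh_uniq : forall r, 0 < r -> fSAdS M Lam r = 0 -> r = rh)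
  (Hrs_deriv : forall r, rh < r -> derivable_pt_lim rstar r (/ fSAdS M Lam r))
  (Hrs_inf : forall eps, 0 < eps -> exists A, forall r, A < r -> Rabs (rstar r) < eps) :
  exists rr : R -> R,
    (forall x, x < 0 -> rh < rr x /\ rstar (rr x) = x) /\
    let phi := fun t x => phiZ M l t x (rr x) in
    (forall t x, x < 0 ->
       exists a b,
         is_deriv2 (fun s => phi s x) t a /\
         is_deriv2 (fun y => phi t y) x b /\
         a - b + fSAdS M Lam (rr x) * VZ M Lam l (rr x) * phi t x = 0) /\
    (forall t,
       (forall a b, a <= b < 0 -> inhabited (Riemann_integrable (fun x => (phi t x) ^ 2) a b)) /\
       exists C, forall a b (pr : Riemann_integrable (fun x => (phi t x) ^ 2) a b),
         a <= b < 0 -> RiemannInt pr <= C) /\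
    (exists kappa, 0 < kappa /\
       (forall t x, x < 0 -> phi t x = exp (kappa * t) * phi 0 x) /\
       exists x0, x0 < 0 /\ phi 0 x0 <> 0) /\
    (exists alpha, - PI <= alpha <= PI /\
       tan alpha = wL M l - 2 * M * Lam / muL l /\
       forall t, exists (dphi : R -> R) (L0 L1 : R),
         (forall x, x < 0 -> derivable_pt_lim (fun y => phi t y) x (dphi x)) /\
         limit1_in (fun x => phi t x) (fun x => x < 0) L0 0 /\
         limit1_in dphi (fun x => x < 0) L1 0 /\
         L1 = tan alpha * L0).
Proof.
  destruct (rstar_inverse M Lam rh rstar HM HLam Hrh Hfrh Hrs_deriv Hrs_inf) as (rr & Hrr).
  assert (Hrr_pos : forall x, x < 0 -> 0 < rr x) by (intros x Hx; destruct (Hrr x Hx); lra).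
  pose proof (rr_derivable M Lam rh rstar HM HLam Hrh Hfrh Hrs_deriv Hrs_inf rr Hrr) as Hrr_deriv.
  pose proof (inv_rr_limit M Lam rh rstar HM HLam Hrh Hfrh Hrs_deriv Hrs_inf rr Hrr) as Hrr_inf.
  exists rr; split; [exact Hrr|]; intros phi.
  split; [|split; [|split]].
  - exact (phiZ_zerilli M Lam l rr HM Hl Hrr_pos Hrr_deriv).
  - exact (phiZ_square_integrable M Lam l rr HM Hl Hrr_pos Hrr_deriv).
  - exact (phiZ_exponential_growth M l rr HM Hl Hrr_pos).
  - set (tan_alpha := wL M l - 2 * M * Lam / muL l).
    exists (atan tan_alpha); pose proof (atan_bound tan_alpha); pose proof PI_RGT_0.
    rewrite tan_atan; split; [lra | split; [reflexivity|]].
    exact (phiZ_robin M Lam l rr HM Hl Hrr_pos Hrr_deriv Hrr_inf).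
Qed.
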